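(* Let $\tau,\delta\in W$ be defined recursively by $\tau=(1,\tau)\sigma$ and $\delta=(\delta,\delta)\sigma$. Then $H=\langle\tau,\delta\rangle$ is infinite dihedral, and $N_W(H)=H$.
   Context: $W$ is the isometry group of the binary rooted tree $\{0,1\}^*$. Elements are written $(g_0,g_1)\pi$ with $\pi\in\mathrm{Sym}(\{0,1\})$, meaning $(xw)^{(g_0,g_1)\pi}=x^\pi w^{g_x}$; $\sigma$ is the nontrivial permutation of $\{0,1\}$ acting rigidly at the root. *)

From mathcomp Require Import all_boot all_algebra.
Set Implicit Arguments. Unset Strict Implicit. Unset Printing Implicit Defensive.
Import GRing.Theory Num.Theory.

(* Vertices of the binary rooted tree {0,1}^*: words over bool
   (false = 0, true = 1); the root is the empty word. *)
Notation word := (seq bool).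

(* Elements of W act on the right: x^g is written (g x) here, and the
   product g h (first g, then h) is the function (fun x => h (g x)). *)
Definition wmul (g h : word -> word) : word -> word := fun x => h (g x).

(* W = isometry group of the rooted binary tree = automorphisms of the
   rooted tree: bijections of the vertex set preserving the level and the
   ancestor (prefix) relation. *)
Definition inW (g : word -> word) : Prop :=
  bijective g /\ (forall w, size (g w) = size w) /\
  (forall u v, prefix u v -> prefix (g u) (g v)).

(* tau = (1, tau) sigma :  0w -> 1w,  1w -> 0 w^tau *)
Fixpoint tau (w : word) : word :=
  match w with
  | [::] => [::]
  | false :: w' => true :: w'
  | true :: w' => false :: tau w'
  end.

(* delta = (delta, delta) sigma :  xw -> x^sigma w^delta *)
Fixpoint delta (w : word) : word :=
  match w with
  | [::] => [::]
  | x :: w' => negb x :: delta w'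
  end.

Inductive inH : (word -> word) -> Prop :=
  | inH_id : inH id
  | inH_tau : inH tau
  | inH_delta : inH delta
  | inH_mul : forall g h, inH g -> inH h -> inH (wmul g h)
  | inH_inv : forall g h, inH g -> cancel g h -> cancel h g -> inH h.

Definition inNWH (g : word -> word) : Prop :=
  inW g /\ exists ginv : word -> word,
    [/\ cancel g ginv, cancel ginv g &
        forall h, inH h <-> inH (wmul (wmul ginv h) g)].

(* The infinite dihedral group D_infty = Z x| Z/2, elements (n, a)
   standing for r^n s^a, with (m,a)(n,b) = (m + (-1)^a n, a xor b). *)
Definition Dinf := (int * bool)%type.
Definition Dinf_mul (x y : Dinf) : Dinf :=
  ((x.1 + (if x.2 then - y.1 else y.1))%R, addb x.2 y.2).

Definition H_infinite_dihedral : Prop :=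
  exists phi : Dinf -> (word -> word),
    [/\ injective phi,
        (forall x y, phi (Dinf_mul x y) = wmul (phi x) (phi y)),
        (forall x, inH (phi x)) &
        (forall h, inH h -> exists x, phi x = h)].

From mathcomp Require Import all_boot all_algebra.
From mathcomp Require Import ring zify.
From Stdlib Require Import FunctionalExtensionality.
Set Implicit Arguments. Unset Strict Implicit. Unset Printing Implicit Defensive.
Import GRing.Theory.
Local Open Scope ring_scope.

(* Reading a word [w = b_0 b_1 ... b_(k-1)] as the integer [wval w = sum b_i 2^i]
   identifies level [k] of the tree with Z/2^k.  On every level tau acts as
   [x |-> x + 1] and delta as [x |-> -x - 1], so the elements of H are exactly
   the maps [x |-> +-x + n] with [n] an integer, and these form a copy of the
   infinite dihedral group.
   Conversely let g normalize H.  The conjugate of tau by g lies in H and is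
   not a reflection, since tau^2 <> 1; so it is a translation by some [n], and
   g, intertwining tau with it, acts on level [k] as [x |-> n x + c_k].  The
   same holds for g^-1, whence n = +-1.  Next the conjugate of delta must be a
   reflection [x |-> -x - p], which forces [2 c_k = n - p (mod 2^k)].  As g
   preserves prefixes, the [c_k] converge 2-adically, necessarily to the integer
   (n - p)/2, so g itself is a map [x |-> +-x + r] of H. *)

Fixpoint wval (w : word) : int := if w is b :: w' then b%:Z + 2 * wval w' else 0.

Lemma wval_ge0 w : 0 <= wval w.
Proof. by elim: w => //= b w IH; lia. Qed.

Lemma wval_cat u v : wval (u ++ v) = wval u + 2 ^+ size u * wval v.
Proof. by elim: u => [|b u IH] /=; rewrite ?IH ?expr0 ?exprS; ring. Qed.

Lemma wval_nseq0 k : wval (nseq k false) = 0.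
Proof. by elim: k => //= k ->. Qed.

Lemma wval_prefix u v : prefix u v -> (2 ^+ size u %| wval v - wval u)%Z.
Proof. by case/prefixP=> s ->; rewrite wval_cat addrC addKr dvdz_mulr. Qed.

Lemma dvdz_pow2S k z : (2 ^+ k.+1 %| 2 * z)%Z = (2 ^+ k %| z)%Z.
Proof. by rewrite exprS dvdz_mul2l. Qed.

Lemma dvdz_pow2S_double k z x : z = 2 * x -> (2 ^+ k %| x)%Z -> (2 ^+ k.+1 %| z)%Z.
Proof. by move=> ->; rewrite dvdz_pow2S. Qed.

Lemma eq_word_mod u v :
  size u = size v -> (2 ^+ size u %| wval u - wval v)%Z -> u = v.
Proof.
elim: u v => [|b u IH] [|c v] //= [Es] Hd.
have Ebc : b = c.
  have := dvdz_trans (dvdz_exp2l 2 (ltn0Sn (size u))) Hd.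
  by rewrite expr1; case: b c {Hd} => [] [] /=; lia.
rewrite -Ebc (IH v) // -dvdz_pow2S.
by congr (_ %| _)%Z: Hd; rewrite Ebc; ring.
Qed.

Lemma dvdz_pow2_eq0 z : (forall k, (2 ^+ k %| z)%Z) -> z = 0.
Proof.
move=> Hz; apply/eqP; rewrite -absz_eq0; apply: contraT; rewrite -lt0n => nz.
have := Hz `|z|%N; rewrite dvdzE abszX /= => /(dvdn_leq nz).
by rewrite leqNgt ltn_expl.
Qed.

(* [%%] is the nonnegative remainder, so for [z < 0] this is the two's-complement
   expansion: [digits k] is the reduction Z -> Z/2^k. *)
Fixpoint digits (k : nat) (z : int) : word :=
  if k is k'.+1 then ((z %% 2)%Z != 0) :: digits k' (z %/ 2)%Z else [::].

Lemma size_digits k z : size (digits k z) = k.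
Proof. by elim: k z => //= k IH z; rewrite IH. Qed.

Lemma wval_digits k z : (2 ^+ k %| wval (digits k z) - z)%Z.
Proof.
elim: k z => [|k IH] z /=; first by rewrite expr0 dvd1z.
by apply: dvdz_pow2S_double (IH (z %/ 2)%Z); case: eqP => /=; lia.
Qed.

Definition size_preserving (g : word -> word) : Prop := forall w, size (g w) = size w.

Definition affine_at (k : nat) (a b : int) (g : word -> word) : Prop :=
  forall w, size w = k -> (2 ^+ k %| wval (g w) - (a * wval w + b))%Z.

Definition affine (a b : int) (g : word -> word) : Prop :=
  size_preserving g /\ forall k, affine_at k a b g.

Lemma affine_at_offset k a b b' g :
  (2 ^+ k %| b - b')%Z -> affine_at k a b g -> affine_at k a b' g.
Proof.
move=> Hb Hg w Hw; have -> : wval (g w) - (a * wval w + b')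
  = wval (g w) - (a * wval w + b) + (b - b') by ring.
by rewrite rpredD ?Hg.
Qed.

Lemma affine_at_comp k a b c d g h : size_preserving g ->
  affine_at k a b g -> affine_at k c d h -> affine_at k (c * a) (c * b + d) (wmul g h).
Proof.
move=> Sg Hg Hh w Hw; rewrite /wmul.
have -> : wval (h (g w)) - (c * a * wval w + (c * b + d)) =
  (wval (h (g w)) - (c * wval (g w) + d)) + c * (wval (g w) - (a * wval w + b)) by ring.
by rewrite rpredD ?dvdz_mull ?Hg ?Hh ?Sg.
Qed.

Lemma affine_comp a b c d g h :
  affine a b g -> affine c d h -> affine (c * a) (c * b + d) (wmul g h).
Proof.
move=> [Sg Hg] [Sh Hh]; split=> [w|k]; first by rewrite /wmul Sh Sg.
exact: affine_at_comp.
Qed.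

Lemma affine_at_coef k a b a' b' g : affine_at k a b g -> affine_at k a' b' g ->
  (2 ^+ k %| a - a')%Z /\ (2 ^+ k %| b - b')%Z.
Proof.
move=> H H'.
have diff w : size w = k -> (2 ^+ k %| (a - a') * wval w + (b - b'))%Z.
  move=> Hw; have -> : (a - a') * wval w + (b - b') =
    (wval (g w) - (a' * wval w + b')) - (wval (g w) - (a * wval w + b)) by ring.
  by rewrite rpredB ?H ?H'.
have Hb := diff _ (size_nseq k false); rewrite wval_nseq0 mulr0 add0r in Hb.
split=> //; case: k diff Hb {H H'} => [|k] diff Hb; first by rewrite expr0 dvd1z.
have Hab := diff (true :: nseq k false) (congr1 S (size_nseq k false)).
have -> : a - a' = ((a - a') * wval (true :: nseq k false) + (b - b')) - (b - b').
  by rewrite /= wval_nseq0; ring.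
exact: rpredB.
Qed.

Lemma affine_coef a b a' b' g : affine a b g -> affine a' b' g -> a = a' /\ b = b'.
Proof.
move=> [_ H] [_ H']; have coef k := affine_at_coef (H k) (H' k).
by split; apply/eqP; rewrite -subr_eq0; apply/eqP/dvdz_pow2_eq0 => k; case: (coef k).
Qed.

Lemma affine_eq a b g h : affine a b g -> affine a b h -> g = h.
Proof.
move=> [Sg Hg] [Sh Hh]; apply: functional_extensionality => w.
apply: eq_word_mod; first by rewrite Sg Sh.
have -> : wval (g w) - wval (h w) =
  (wval (g w) - (a * wval w + b)) - (wval (h w) - (a * wval w + b)) by ring.
by rewrite Sg rpredB ?Hg ?Hh.
Qed.

Lemma affine_prefix a b g : affine a b g -> forall u v, prefix u v -> prefix (g u) (g v).
Proof.
move=> [Sg Hg] u v uv; have le_uv := size_prefix uv.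
have take_size : size (take (size u) (g v)) = size u by rewrite size_takel ?Sg.
rewrite prefixE Sg; apply/eqP/eq_word_mod; rewrite take_size ?Sg //.
have dvd_v x : (2 ^+ size v %| x)%Z -> (2 ^+ size u %| x)%Z.
  exact: dvdz_trans (dvdz_exp2l 2 le_uv).
have := wval_prefix (prefix_take (g v) (size u)); rewrite take_size => Etake.
have -> : wval (take (size u) (g v)) - wval (g u) =
  (wval (g v) - (a * wval v + b)) - (wval (g v) - wval (take (size u) (g v)))
  + a * (wval v - wval u) - (wval (g u) - (a * wval u + b)) by ring.
apply: rpredB; last exact: Hg.
apply: rpredD; last exact/dvdz_mull/wval_prefix.
by apply: rpredB Etake; apply/dvd_v/Hg.
Qed.

Definition affine_map (a b : int) (w : word) : word := digits (size w) (a * wval w + b).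

Lemma affine_map_affine a b : affine a b (affine_map a b).
Proof. by split=> [w|k w <-]; [exact: size_digits | exact: wval_digits]. Qed.

Lemma affine_id : affine 1 0 id.
Proof. by split=> // k w _; rewrite mul1r addr0 subrr dvdz0. Qed.

Lemma affine_tau : affine 1 1 tau.
Proof.
split; first by elim=> [|[] w IH] //=; rewrite IH.
move=> k w <-; elim: w => [|[] w IH] /=; first by rewrite expr0 dvd1z.
- by apply: dvdz_pow2S_double IH; ring.
- by apply: dvdz_pow2S_double (dvdz0 _); ring.
Qed.

Lemma affine_delta : affine (-1) (-1) delta.
Proof.
split; first by elim=> [|b w IH] //=; rewrite IH.
move=> k w <-; elim: w => [|[] w IH] /=; first by rewrite expr0 dvd1z.
all: by apply: dvdz_pow2S_double IH; ring.
Qed.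

Lemma affine_iter b f j : affine 1 b f -> affine 1 (j%:Z * b) (iter j f).
Proof.
move=> Hf; elim: j => [|j IH]; first by rewrite mul0r; exact: affine_id.
have Ej : 1 * (j%:Z * b) + b = j.+1%:Z * b by rewrite -addn1 PoszD; ring.
by have := affine_comp IH Hf; rewrite mulr1 Ej.
Qed.

Lemma word_tau_iter w : w = iter `|wval w|%N tau (nseq (size w) false).
Proof.
have [S H] := affine_iter `|wval w|%N affine_tau.
apply: eq_word_mod; first by rewrite S size_nseq.
have := H _ _ (size_nseq (size w) false).
rewrite wval_nseq0 gez0_abs ?wval_ge0 // => Hw.
by rewrite -rpredN opprB; congr (_ %| _)%Z: Hw; ring.
Qed.

(* [(n, e)] acts as [x |-> (-1)^e (x + n)]: translating before reflecting makes
   [Dinf_mul] match the left-to-right composition [wmul]. *)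
Definition Dinf_map (x : Dinf) : word -> word :=
  affine_map ((-1) ^+ x.2) ((-1) ^+ x.2 * x.1).

Lemma Dinf_map_affine (x : Dinf) : affine ((-1) ^+ x.2) ((-1) ^+ x.2 * x.1) (Dinf_map x).
Proof. exact: affine_map_affine. Qed.

Lemma Dinf_map_mul (x y : Dinf) :
  Dinf_map (Dinf_mul x y) = wmul (Dinf_map x) (Dinf_map y).
Proof.
have -> : Dinf_map (Dinf_mul x y) = affine_map ((-1) ^+ y.2 * (-1) ^+ x.2)
    ((-1) ^+ y.2 * ((-1) ^+ x.2 * x.1) + (-1) ^+ y.2 * y.1).
  by case: x y => m [] [n []]; congr affine_map; rewrite /= ?expr0 ?expr1; ring.
apply: affine_eq (affine_map_affine _ _) _.
exact: affine_comp (affine_map_affine _ _) (affine_map_affine _ _).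
Qed.

Lemma Dinf_map1 : Dinf_map (0, false) = id.
Proof.
apply: affine_eq affine_id; rewrite /Dinf_map /= expr0 mulr0; exact: affine_map_affine.
Qed.

Lemma tau_Dinf_map : Dinf_map (1, false) = tau.
Proof.
apply: affine_eq affine_tau; rewrite /Dinf_map /= expr0 mulr1; exact: affine_map_affine.
Qed.

Lemma delta_Dinf_map : Dinf_map (1, true) = delta.
Proof.
apply: affine_eq affine_delta; rewrite /Dinf_map /= expr1 mulr1; exact: affine_map_affine.
Qed.

Lemma Dinf_map_inj : injective Dinf_map.
Proof.
move=> [m a] [n b] E.
have := Dinf_map_affine (n, b); rewrite -E => /(affine_coef (Dinf_map_affine (m, a))) /=.
by case: a b {E} => [] []; rewrite ?expr0 ?expr1 => -[Es Eo]; congr pair; lia.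
Qed.

Definition Dinf_inv (x : Dinf) : Dinf := if x.2 then x else (- x.1, false).

Lemma Dinf_mulgV (x : Dinf) : Dinf_mul x (Dinf_inv x) = (0, false).
Proof. by case: x => n [] /=; rewrite /Dinf_mul /= ?subrr ?addbb. Qed.

Lemma Dinf_mulVg (x : Dinf) : Dinf_mul (Dinf_inv x) x = (0, false).
Proof. by case: x => n [] /=; rewrite /Dinf_mul /= ?subrr ?addNr. Qed.

Lemma Dinf_mapK (x : Dinf) : cancel (Dinf_map x) (Dinf_map (Dinf_inv x)).
Proof.
move=> w; have /(congr1 (@^~ w)) := Dinf_map_mul x (Dinf_inv x).
by rewrite Dinf_mulgV Dinf_map1.
Qed.

Lemma Dinf_mapVK (x : Dinf) : cancel (Dinf_map (Dinf_inv x)) (Dinf_map x).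
Proof.
move=> w; have /(congr1 (@^~ w)) := Dinf_map_mul (Dinf_inv x) x.
by rewrite Dinf_mulVg Dinf_map1.
Qed.

Lemma inH_Dinf_map (x : Dinf) : inH (Dinf_map x).
Proof.
have inH_pos (k : nat) : inH (Dinf_map (k%:Z, false)).
  elim: k => [|k IH]; first by rewrite Dinf_map1; exact: inH_id.
  have -> : (k.+1%:Z, false) = Dinf_mul (k%:Z, false) (1, false).
    by rewrite /Dinf_mul -addn1 PoszD.
  by rewrite Dinf_map_mul tau_Dinf_map; exact: inH_mul IH inH_tau.
have inH_transl n : inH (Dinf_map (n, false)).
  case: n => k; first exact: inH_pos.
  exact: inH_inv (inH_pos k.+1) (Dinf_mapK _) (Dinf_mapVK _).
case: x => n [] //; have -> : (n, true) = Dinf_mul (n - 1, false) (1, true).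
  by rewrite /Dinf_mul /=; congr pair; ring.
by rewrite Dinf_map_mul delta_Dinf_map; exact: inH_mul (inH_transl _) inH_delta.
Qed.

Lemma inH_image h : inH h -> exists x, h = Dinf_map x.
Proof.
elim=> [| | |g1 g2 _ [x ->] _ [y ->]|g1 g2 _ [x ->] K1 K2].
- by exists (0, false); rewrite Dinf_map1.
- by exists (1, false); rewrite tau_Dinf_map.
- by exists (1, true); rewrite delta_Dinf_map.
- by exists (Dinf_mul x y); rewrite Dinf_map_mul.
- exists (Dinf_inv x); apply: functional_extensionality => w.
  by rewrite -{1}(Dinf_mapVK x w) K1.
Qed.

Lemma H_is_infinite_dihedral : H_infinite_dihedral.
Proof.
exists Dinf_map; split.
- exact: Dinf_map_inj.
- exact: Dinf_map_mul.
- exact: inH_Dinf_map.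
- by move=> h /inH_image [x ->]; exists x.
Qed.

Lemma inW_Dinf_map (x : Dinf) : inW (Dinf_map x).
Proof.
have [size_x _] := Dinf_map_affine x.
split; first exact: Bijective (Dinf_mapK x) (Dinf_mapVK x).
by split=> //; exact: affine_prefix (Dinf_map_affine x).
Qed.

Lemma inH_inNWH g : inH g -> inNWH g.
Proof.
case/inH_image=> x ->; split; first exact: inW_Dinf_map.
exists (Dinf_map (Dinf_inv x)); split; [exact: Dinf_mapK | exact: Dinf_mapVK | move=> h].
split=> [Hh | Hconj]; first exact: inH_mul (inH_mul (inH_Dinf_map _) Hh) (inH_Dinf_map _).
suff -> : h = wmul (wmul (Dinf_map x)
    (wmul (wmul (Dinf_map (Dinf_inv x)) h) (Dinf_map x))) (Dinf_map (Dinf_inv x)).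
  exact: inH_mul (inH_mul (inH_Dinf_map _) Hconj) (inH_Dinf_map _).
by apply: functional_extensionality => w; rewrite /wmul !Dinf_mapK.
Qed.

Lemma tau_conj_translation g ginv : cancel g ginv ->
  inH (wmul (wmul ginv tau) g) ->
  exists n, forall w, g (tau w) = Dinf_map (n, false) (g w).
Proof.
move=> gK /inH_image [[n a] Ex].
have conj w : g (tau w) = Dinf_map (n, a) (g w) by rewrite -Ex /wmul gK.
case: a {Ex} conj => conj; last by exists n.
(* a reflection is an involution, whereas tau^2 moves the word 00 *)
have := Dinf_mapK (n, true) (g [:: false; false]).
by rewrite /= -!conj => /(can_inj gK).
Qed.

Lemma affine_at_of_tau_conj g n : size_preserving g ->
  (forall w, g (tau w) = Dinf_map (n, false) (g w)) ->
  forall k, affine_at k n (wval (g (nseq k false))) g.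
Proof.
move=> Sg gtau k w Hw.
have transl : affine 1 n (Dinf_map (n, false)).
  by have := Dinf_map_affine (n, false); rewrite /= expr0 mul1r.
have giter j z : g (iter j tau z) = iter j (Dinf_map (n, false)) (g z).
  by elim: j => //= j IH; rewrite gtau IH.
have [_ Hj] := affine_iter `|wval w|%N transl.
have := Hj k (g (nseq k false)); rewrite Sg size_nseq => /(_ erefl).
rewrite -giter -Hw -word_tau_iter gez0_abs ?wval_ge0 // => Hgw.
by congr (_ %| _)%Z: Hgw; ring.
Qed.

Lemma two_adic_limit_half (c : nat -> int) (e : int) :
  (forall k, (2 ^+ k %| c k.+1 - c k)%Z) ->
  (forall k, (2 ^+ k %| 2 * c k - e)%Z) ->
  exists r, forall k, (2 ^+ k %| c k - r)%Z.
Proof.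
move=> cS c2.
have [r Er] : exists r, e = 2 * r.
  have /dvdzP [q Eq] : (2 %| e)%Z.
    have -> : e = 2 * c 1%N - (2 * c 1%N - e) by ring.
    by rewrite rpredB ?dvdz_mulr // -[2 in (2 %| _)%Z]expr1.
  by exists q; rewrite Eq mulrC.
exists r => k.
have half : (2 ^+ k %| c k.+1 - r)%Z by rewrite -dvdz_pow2S mulrBr -Er.
have -> : c k - r = (c k.+1 - r) - (c k.+1 - c k) by ring.
by rewrite rpredB.
Qed.

Lemma affine_sign_Dinf_map (s : bool) r g :
  affine ((-1) ^+ s) r g -> g = Dinf_map ((-1) ^+ s * r, s).
Proof.
move=> Hg; apply: affine_eq Hg _.
by have := Dinf_map_affine ((-1) ^+ s * r, s); rewrite /= mulrA -signr_addb addbb mul1r.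
Qed.

Lemma int_unit_sign (n m : int) : n * m = 1 -> exists s : bool, n = (-1) ^+ s.
Proof.
rewrite mulrC => /intUnitRing.unitzPl; rewrite qualifE.
by case/orP=> /eqP ->; [exists false | exists true].
Qed.

Section Normalizer.

Variables g ginv : word -> word.
Hypotheses (gK : cancel g ginv) (ginvK : cancel ginv g).
Hypothesis g_size : size_preserving g.
Hypothesis g_prefix : forall u v, prefix u v -> prefix (g u) (g v).
Hypothesis g_normalizes : forall h, inH h <-> inH (wmul (wmul ginv h) g).

Let ginv_size : size_preserving ginv.
Proof. by move=> w; rewrite -{2}(ginvK w) g_size. Qed.

Local Notation c k := (wval (g (nseq k false))).

Lemma normalizer_slope : exists s : bool, forall k, affine_at k ((-1) ^+ s) (c k) g.
Proof.
have [n Hg] : exists n, forall k, affine_at k n (c k) g.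
  have [n gtau] := tau_conj_translation gK (proj1 (g_normalizes tau) inH_tau).
  by exists n; exact: affine_at_of_tau_conj.
have [m Hginv] : exists m, forall k, affine_at k m (wval (ginv (nseq k false))) ginv.
  have : inH (wmul (wmul g tau) ginv).
    apply/g_normalizes; congr inH: inH_tau.
    by apply: functional_extensionality => w; rewrite /wmul !ginvK.
  case/(tau_conj_translation ginvK) => m ginv_tau.
  by exists m; exact: affine_at_of_tau_conj ginv_size ginv_tau.
have /int_unit_sign [s En] : n * m = 1.
  apply/eqP; rewrite -subr_eq0; apply/eqP/dvdz_pow2_eq0 => k.
  have := affine_at_comp ginv_size (Hginv k) (Hg k).
  have -> : wmul ginv g = id by apply: functional_extensionality => w; exact: ginvK.
  by move=> Hid; have [] := affine_at_coef Hid (affine_id.2 k).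
by exists s; rewrite -En.
Qed.

Lemma normalizer_affine : exists (s : bool) r, affine ((-1) ^+ s) r g.
Proof.
have [s Hg] := normalizer_slope.
have [[p a] Ex] := inH_image (proj1 (g_normalizes delta) inH_delta).
have gdelta : wmul delta g = wmul g (Dinf_map (p, a)).
  by rewrite -Ex; apply: functional_extensionality => w; rewrite /wmul gK.
have coef k : (2 ^+ k %| (-1) ^+ s * -1 - (-1) ^+ a * (-1) ^+ s)%Z /\
    (2 ^+ k %| (-1) ^+ s * -1 + c k - ((-1) ^+ a * c k + (-1) ^+ a * p))%Z.
  have := affine_at_comp g_size (Hg k) ((Dinf_map_affine (p, a)).2 k).
  rewrite -gdelta; apply: affine_at_coef.
  exact: affine_at_comp affine_delta.1 (affine_delta.2 k) (Hg k).
case: a {Ex gdelta} coef => coef; last first.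
  have := dvdz_pow2_eq0 (fun k => (coef k).1).
  by case: s {Hg coef}; rewrite /= ?expr0 ?expr1; lia.
have half k : (2 ^+ k %| 2 * c k - ((-1) ^+ s - p))%Z.
  by have [_] := coef k; rewrite /= expr1 => H; congr (_ %| _)%Z: H; ring.
have step k : (2 ^+ k %| c k.+1 - c k)%Z.
  have : prefix (nseq k false) (nseq k.+1 false) by rewrite -addn1 nseqD prefix_prefix.
  by move/g_prefix/wval_prefix; rewrite g_size size_nseq.
have [r Hr] := two_adic_limit_half (c := fun k => c k) step half.
by exists s, r; split=> // k; exact: affine_at_offset (Hr k) (Hg k).
Qed.

Lemma normalizer_inH : inH g.
Proof.
have [s [r Hg]] := normalizer_affine.
by rewrite (affine_sign_Dinf_map Hg); exact: inH_Dinf_map.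
Qed.

End Normalizer.

Theorem theorem4p12 :
  H_infinite_dihedral /\ (forall g : word -> word, inNWH g <-> inH g).
Proof.
split; first exact: H_is_infinite_dihedral.
move=> g; split; last exact: inH_inNWH.
move=> [[_ [g_size g_prefix]] [ginv [gK ginvK g_normalizes]]].
exact: normalizer_inH gK ginvK g_size g_prefix g_normalizes.
Qed.
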